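(* Let $(\mathcal R,\tau)$ be a t-minimal Hausdorff geometric structure and $\mathcal S$ a lore of $(\mathcal R,\tau)$. Let $X$ and $Y$ be $A$-definable sets with $\dim(X)=\dim(Y)$, and let $f:X\to Y$ be a finite-to-one $A$-definable function. Let $x\in X$ be generic over $A$. Then $f$ restricts to a loric homeomorphism between a neighborhood of $x$ in $X$ and a neighborhood of $f(x)$ in $Y$.
   Context: A structure $\mathcal R$ is geometric if (in all models of its theory) $\operatorname{acl}$ satisfies exchange and $\mathcal R$ eliminates $\exists^\infty$; $\dim$ denotes acl-dimension of tuples and definable sets, and $a\in X$ is generic over $A$ if $\dim(a/A)=\dim(X)$. ''Definable'' allows parameters. Given a topology $\tau$ on $R$ (extended to definable subsets of $R^n$ by product and subspace topologies), $(\mathcal R,\tau)$ is a Hausdorff geometric structure if: (1) $\tau$ is Hausdorff; (2) $\mathcal R$ is geometric and $\aleph_1$-saturated; (3) if $X\subset R^n$ is $A$-definable and $a\in\overline{\overline X-X}$ then $\dim(a/A)<\dim(X)$; (4) if $X$ is definable over a countable set $A$, $a\in X$ is generic over $A$, and $B\supseteq A$ is countable, then every neighborhood of $a$ contains a generic of $X$ over $B$; (5) if $X,Y$ and $Z\subset X\times Y$ are $A$-definable of the same dimension with both projections $Z\to X$, $Z\to Y$ finite-to-one, and $(x,y)\in Z$ is generic over $A$, then there are open neighborhoods $U\ni x$, $V\ni y$ such that $Z\cap(U\times V)$ is the graph of a homeomorphism $U\to V$. It is t-minimal if moreover there is a formula $\phi(x,\bar y)$ without parameters whose instances form a basis of $\tau$,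 and $R$ has no isolated points. A lore is a collection $\mathcal S$ of definable sets (''loric sets'') such that: (i) $R$ and the diagonal of $R^2$ are loric, and loric sets are closed under finite products, finite intersections and coordinate permutations; (ii) if $f:X\to Y$ is a definable homeomorphism with $X$ and the graph of $f$ loric, then $Y$ is loric; (iii) every definable open subset of a loric set is loric, and a definable set admitting an open cover by loric sets is loric; (iv) every nonempty $A$-definable $X$ has a relatively open $A$-definable loric subset $X'$ with $\dim(X-X')<\dim(X)$. A loric map is a continuous function with loric graph; a loric homeomorphism is a loric map which is a homeomorphism. *)

From mathcomp Require Import all_boot all_order all_algebra perm.
From mathcomp Require Import boolp classical_sets cardinality.
Set Implicit Arguments. Unset Strict Implicit. Unset Printing Implicit Defensive.
Local Open Scope classical_set_scope.

Record language := Language {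
  fsym : Type; farity : fsym -> nat;   (* constants = 0-ary function symbols *)
  rsym : Type; rarity : rsym -> nat }.

Inductive term (L : language) : Type :=
| tvar : nat -> term L
| tapp : forall f : fsym L, ('I_(farity f) -> term L) -> term L.

Inductive formula (L : language) : Type :=
| feq : term L -> term L -> formula L
| frel : forall r : rsym L, ('I_(rarity r) -> term L) -> formula L
| fneg : formula L -> formula L
| fand : formula L -> formula L -> formula L
| fex : nat -> formula L -> formula L.

Record lstructure (L : language) := MkStructure {
  carrier :> Type;
  finterp : forall f : fsym L, ('I_(farity f) -> carrier) -> carrier;
  rinterp : forall r : rsym L, ('I_(rarity r) -> carrier) -> Prop }.

Fixpoint teval (L : language) (M : lstructure L) (v : nat -> M) (t : term L) : M :=
  match t with
  | tvar i => v i
  | tapp f args => @finterp L M f (fun j => teval v (args j))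
  end.

Definition upd (T : Type) (v : nat -> T) (i : nat) (a : T) : nat -> T :=
  fun k => if k == i then a else v k.

Fixpoint sat (L : language) (M : lstructure L) (v : nat -> M) (phi : formula L) : Prop :=
  match phi with
  | feq t1 t2 => teval v t1 = teval v t2
  | frel r args => @rinterp L M r (fun j => teval v (args j))
  | fneg p => ~ sat v p
  | fand p q => sat v p /\ sat v q
  | fex i p => exists a : M, sat (upd v i a) p
  end.

(* X subset of M^n is A-definable: X = phi(M, b) for a formula phi whose
   variables 0..n-1 are the coordinates and n..n+k-1 the parameters b in A
   (any other free variable is universally closed). *)
Definition definable_in (L : language) (M : lstructure L) (A : set M) (n : nat)
    (X : set ('I_n -> M)) : Prop :=
  exists (phi : formula L) (k : nat) (b : 'I_k -> M),
    (forall j, A (b j)) /\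
    X = [set x | forall v : nat -> M, (forall i : 'I_n, v i = x i) ->
                   (forall j : 'I_k, v (n + j) = b j) -> sat v phi].

Definition acl_in (L : language) (M : lstructure L) (A : set M) (a : M) : Prop :=
  exists D : set ('I_1 -> M), definable_in A D /\ finite_set D /\ D (fun _ => a).

Definition acl_exchange (L : language) (M : lstructure L) : Prop :=
  forall (A : set M) (a b : M),
    acl_in (A `|` [set b]) a -> ~ acl_in A a -> acl_in (A `|` [set a]) b.

Definition elem_equiv (L : language) (M N : lstructure L) : Prop :=
  forall phi : formula L,
    (forall v : nat -> M, sat v phi) <-> (forall v : nat -> N, sat v phi).

Definition inst1 (L : language) (M : lstructure L) (phi : formula L) (k : nat)
    (b : 'I_k -> M) : set M :=
  [set a | forall v : nat -> M, v 0 = a -> (forall j : 'I_k, v j.+1 = b j) -> sat v phi].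

Definition elim_exists_infty (L : language) (M : lstructure L) : Prop :=
  forall (phi : formula L) (k : nat), exists N : nat, forall b : 'I_k -> M,
    finite_set (inst1 phi b) ->
    exists s : 'I_N -> M, inst1 phi b `<=` range s.

Definition geometric (L : language) (M : lstructure L) : Prop :=
  (forall N : lstructure L, elem_equiv M N -> acl_exchange N) /\ elim_exists_infty M.

Definition aleph1_saturated (L : language) (M : lstructure L) : Prop :=
  forall D : nat -> set ('I_1 -> M),
    (forall k, definable_in setT (D k)) ->
    (forall N, exists x, forall k, (k < N)%N -> D k x) ->
    exists x, forall k, D k x.

Definition dim_ge (L : language) (M : lstructure L) (n : nat) (a : 'I_n -> M)
    (A : set M) (k : nat) : Prop :=
  exists s : 'I_k -> 'I_n, injective s /\
    forall i : 'I_k,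
      ~ acl_in (A `|` (fun y => exists j, j != i /\ y = a (s j))) (a (s i)).

Definition dim_tuple (L : language) (M : lstructure L) (n : nat) (a : 'I_n -> M)
    (A : set M) : nat :=
  \max_(k < n.+1 | `[< dim_ge a A k >]) k.

(* dim(X) (as an int; -1 stands for the dimension of the empty set):
   max of dim(a/B) for a in X and B a countable set over which X is definable *)
Definition dim_set (L : language) (M : lstructure L) (n : nat)
    (X : set ('I_n -> M)) : int :=
  if `[< X = set0 >] then Negz 0 (* = -1 *) else
  Posz (\max_(k < n.+1 | `[< exists B : set M, countable B /\ definable_in B X /\
                                exists2 a, X a & dim_ge a B k >]) k).

Definition generic (L : language) (M : lstructure L) (A : set M) (n : nat)
    (X : set ('I_n -> M)) (a : 'I_n -> M) : Prop :=
  X a /\ Posz (dim_tuple a A) = dim_set X.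

Definition is_topology (T : Type) (tau : set (set T)) : Prop :=
  [/\ tau setT,
      (forall U V, tau U -> tau V -> tau (U `&` V)) &
      (forall F : set (set T), F `<=` tau -> tau (\bigcup_(U in F) U))].

Definition hausdorff (T : Type) (tau : set (set T)) : Prop :=
  forall x y : T, x <> y ->
    exists U V, [/\ tau U, tau V, U x, V y & U `&` V = set0].

Definition prod_open (T : Type) (tau : set (set T)) (n : nat) (U : set ('I_n -> T)) : Prop :=
  forall x, U x -> exists V : 'I_n -> set T,
    (forall i, tau (V i) /\ V i (x i)) /\ [set y | forall i, V i (y i)] `<=` U.

Definition closure (T : Type) (tau : set (set T)) (n : nat) (S : set ('I_n -> T)) :
    set ('I_n -> T) :=
  [set a | forall W, prod_open tau W -> W a -> exists y, W y /\ S y].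

Definition rel_open (T : Type) (tau : set (set T)) (n : nat) (X U : set ('I_n -> T)) : Prop :=
  U `<=` X /\ exists W, prod_open tau W /\ U = W `&` X.

Definition nbhd_in (T : Type) (tau : set (set T)) (n : nat) (X : set ('I_n -> T))
    (x : 'I_n -> T) (N : set ('I_n -> T)) : Prop :=
  N `<=` X /\ exists O, [/\ rel_open tau X O, O x & O `<=` N].

Definition continuous_on (T : Type) (tau : set (set T)) (n m : nat)
    (f : ('I_n -> T) -> ('I_m -> T)) (U : set ('I_n -> T)) : Prop :=
  forall u, U u -> forall W, prod_open tau W -> W (f u) ->
    exists O, [/\ prod_open tau O, O u & forall u', U u' -> O u' -> W (f u')].

Definition homeo_on (T : Type) (tau : set (set T)) (n m : nat)
    (f : ('I_n -> T) -> ('I_m -> T)) (U : set ('I_n -> T)) (V : set ('I_m -> T)) : Prop :=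
  [/\ (forall u, U u -> V (f u)), continuous_on tau f U &
      exists g : ('I_m -> T) -> ('I_n -> T),
        [/\ (forall v, V v -> U (g v)), (forall u, U u -> g (f u) = u),
            (forall v, V v -> f (g v) = v) & continuous_on tau g V]].

Definition join (T : Type) (n m : nat) (x : 'I_n -> T) (y : 'I_m -> T) : 'I_(n + m) -> T :=
  fun i => match split i with inl j => x j | inr j => y j end.

Definition prodset (T : Type) (n m : nat) (X : set ('I_n -> T)) (Y : set ('I_m -> T)) :
    set ('I_(n + m) -> T) :=
  [set z | exists x y, [/\ X x, Y y & z = join x y]].

Definition graph_on (T : Type) (n m : nat) (f : ('I_n -> T) -> ('I_m -> T))
    (U : set ('I_n -> T)) : set ('I_(n + m) -> T) :=
  [set z | exists u, U u /\ z = join u (f u)].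

(* (parameter sets A, B are countable, the paper's standing convention) *)

Local Open Scope ring_scope.

Definition HGS (L : language) (R : lstructure L) (tau : set (set R)) : Prop :=
  [/\ is_topology tau /\ hausdorff tau,
      geometric R /\ aleph1_saturated R,
      (forall (n : nat) (A : set R) (X : set ('I_n -> R)) (a : 'I_n -> R),
          countable A -> definable_in A X ->
          closure tau (closure tau X `\` X) a ->
          Posz (dim_tuple a A) < dim_set X),
      (forall (n : nat) (A B : set R) (X : set ('I_n -> R)) (a : 'I_n -> R),
          countable A -> definable_in A X -> generic A X a ->
          countable B -> A `<=` B ->
          forall U, prod_open tau U -> U a -> exists b, U b /\ generic B X b) &
      (* (5) *)
      (forall (n m : nat) (A : set R) (X : set ('I_n -> R)) (Y : set ('I_m -> R))
              (Z : set ('I_(n + m) -> R)) (x : 'I_n -> R) (y : 'I_m -> R),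
          countable A -> definable_in A X -> definable_in A Y -> definable_in A Z ->
          dim_set X = dim_set Y -> dim_set Y = dim_set Z ->
          Z `<=` prodset X Y ->
          (forall x', finite_set [set y' | Z (join x' y')]) ->
          (forall y', finite_set [set x' | Z (join x' y')]) ->
          generic A Z (join x y) ->
          exists U V, [/\ rel_open tau X U, U x, rel_open tau Y V, V y &
            exists g, homeo_on tau g U V /\ Z `&` prodset U V = graph_on g U])].

Arguments HGS {L} R tau.

Definition t_minimal (L : language) (R : lstructure L) (tau : set (set R)) : Prop :=
  [/\ HGS R tau,
      (exists (phi : formula L) (k : nat),
         (forall b : 'I_k -> R, tau (inst1 phi b)) /\
         (forall (U : set R) (a : R), tau U -> U a ->
            exists b : 'I_k -> R, inst1 phi b a /\ inst1 phi b `<=` U)) &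
      (forall a : R, ~ tau [set a])].

Arguments t_minimal {L} R tau.

Definition lore (L : language) (R : lstructure L) (tau : set (set R))
    (S : forall n : nat, set (set ('I_n -> R))) : Prop :=
  [/\ (forall n X, S n X -> definable_in setT X),
      [/\ S 1%N setT, S 2%N [set x | x ord0 = x ord_max],
          (forall n m X Y, S n X -> S m Y -> S (n + m)%N (prodset X Y)),
          (forall n X Y, S n X -> S n Y -> S n (X `&` Y)) &
          (forall n (s : {perm 'I_n}) X, S n X -> S n [set x | X (fun i => x (s i))])],
      (forall n m (X : set ('I_n -> R)) (Y : set ('I_m -> R)) f,
          homeo_on tau f X Y -> definable_in setT (graph_on f X) ->
          S n X -> S (n + m)%N (graph_on f X) -> S m Y),
      (forall n (X U : set ('I_n -> R)),
          S n X -> definable_in setT U -> rel_open tau X U -> S n U) /\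
      (forall n (X : set ('I_n -> R)), definable_in setT X ->
          (forall x, X x -> exists U, [/\ S n U, rel_open tau X U & U x]) -> S n X) &
      (* (iv) *)
      (forall n (A : set R) (X : set ('I_n -> R)),
          countable A -> definable_in A X -> X !=set0 ->
          exists X', [/\ rel_open tau X X', definable_in A X', S n X' &
                         dim_set (X `\` X') < dim_set X])].

Arguments lore {L} R tau S.

Definition loric_homeo (L : language) (R : lstructure L) (tau : set (set R))
    (S : forall n : nat, set (set ('I_n -> R))) (n m : nat)
    (f : ('I_n -> R) -> ('I_m -> R)) (U : set ('I_n -> R)) (V : set ('I_m -> R)) : Prop :=
  homeo_on tau f U V /\ S (n + m)%N (graph_on f U).

(* The graph G of f has the dimension of X, because each f u is algebraic over
   u, so (x, f x) is generic in G.  Axiom (5) of Hausdorff geometric structures,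
   applied to G inside X * Y, makes f a homeomorphism between relatively open
   neighbourhoods of x and f x; axiom (iv) of lores gives a relatively open
   loric part of G whose complement has smaller dimension, so it contains the
   generic point (x, f x).  Shrinking the neighbourhood of x to a box of basic
   definable open sets (t-minimality) makes the graph of the restriction of f a
   definable relatively open subset of that loric part, hence loric. *)

From mathcomp Require Import all_boot all_order all_algebra perm.
From mathcomp Require Import boolp classical_sets cardinality.
From mathcomp Require Import zify.
Set Implicit Arguments. Unset Strict Implicit. Unset Printing Implicit Defensive.
Import Order.TTheory.
Local Open Scope classical_set_scope.

Section Expressible.
Variables (L : language) (M : lstructure L).

Fixpoint term_bound (t : term L) : nat :=
  match t with
  | tvar i => i.+1
  | @tapp _ f args => (\max_(j < farity f) term_bound (args j))%N
  end.

Fixpoint formula_bound (phi : formula L) : nat :=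
  match phi with
  | feq t1 t2 => maxn (term_bound t1) (term_bound t2)
  | @frel _ r args => (\max_(j < rarity r) term_bound (args j))%N
  | fneg p => formula_bound p
  | fand p q => maxn (formula_bound p) (formula_bound q)
  | fex i p => formula_bound p
  end.

Fixpoint teval_eq_on (t : term L) (v v' : nat -> M) {struct t} :
  (forall i, i < term_bound t -> v i = v' i) -> teval v t = teval v' t.
Proof.
case: t => [i|f args] /= vv'; first exact: vv'.
congr finterp; apply: funext => j; apply: teval_eq_on => i ij; apply: vv'.
exact: leq_trans ij (@leq_bigmax _ (fun j => term_bound (args j)) j).
Qed.

Lemma sat_eq_on (phi : formula L) (v v' : nat -> M) :
  (forall i, i < formula_bound phi -> v i = v' i) -> (sat v phi <-> sat v' phi).
Proof.
elim: phi v v' => [t1 t2|r args|p IH|p IHp q IHq|i p IH] v v' /= vv'.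
- by rewrite !(@teval_eq_on _ v v') // => k kb; apply: vv'; rewrite leq_max kb ?orbT.
- suff -> : (fun j => teval v (args j)) = (fun j => teval v' (args j)) by [].
  apply: funext => j; apply: teval_eq_on => k kb; apply: vv'.
  exact: leq_trans kb (@leq_bigmax _ (fun j => term_bound (args j)) j).
- by rewrite (IH v v').
- by rewrite (IHp v v') ?(IHq v v') // => k kb; apply: vv'; rewrite leq_max kb ?orbT.
- have E a : forall k, k < formula_bound p -> upd v i a k = upd v' i a k.
    by move=> k kb; rewrite /upd; case: ifP => // _; apply: vv'.
  by split=> -[a sa]; exists a; move: sa; rewrite (IH _ _ (E a)).
Qed.

Fixpoint term_rename (s : nat -> nat) (t : term L) : term L :=
  match t with
  | tvar i => tvar L (s i)
  | @tapp _ f args => @tapp L f (fun j => term_rename s (args j))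
  end.

Fixpoint formula_rename (s : nat -> nat) (phi : formula L) : formula L :=
  match phi with
  | feq t1 t2 => feq (term_rename s t1) (term_rename s t2)
  | @frel _ r args => @frel L r (fun j => term_rename s (args j))
  | fneg p => fneg (formula_rename s p)
  | fand p q => fand (formula_rename s p) (formula_rename s q)
  | fex i p => fex (s i) (formula_rename s p)
  end.

Fixpoint teval_rename (s : nat -> nat) (t : term L) (v : nat -> M) {struct t} :
  teval v (term_rename s t) = teval (v \o s) t.
Proof. by case: t => [i|f args] //=; congr finterp; apply: funext => j. Qed.

Lemma sat_rename (s : nat -> nat) (phi : formula L) (v : nat -> M) :
  injective s -> (sat v (formula_rename s phi) <-> sat (v \o s) phi).
Proof.
move=> s_inj; elim: phi v => [t1 t2|r args|p IH|p IHp q IHq|i p IH] v /=.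
- by rewrite !teval_rename.
- suff -> : (fun j => teval v (term_rename s (args j))) =
            (fun j => teval (v \o s) (args j)) by [].
  by apply: funext => j; rewrite teval_rename.
- by rewrite IH.
- by rewrite IHp IHq.
- have upd_rename a : upd v (s i) a \o s = upd (v \o s) i a.
    by apply: funext => k; rewrite /upd /= (inj_eq s_inj).
  by split=> -[a sa]; exists a; [rewrite -upd_rename; apply/IH | apply/IH; rewrite upd_rename].
Qed.

Definition expressible (P : (nat -> M) -> Prop) :=
  exists phi : formula L, forall v, P v <-> sat v phi.

Definition supported_in (N : nat) (P : (nat -> M) -> Prop) :=
  forall v v', (forall i, i < N -> v i = v' i) -> (P v <-> P v').

Lemma expressible_ext P Q : (forall v, P v <-> Q v) -> expressible P -> expressible Q.
Proof. by move=> PQ [phi Pphi]; exists phi => v; rewrite -PQ. Qed.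

Lemma expressible_sat phi : expressible (fun v => sat v phi).
Proof. by exists phi. Qed.

Lemma expressible_eq i j : expressible (fun v => v i = v j).
Proof. by exists (feq (tvar L i) (tvar L j)). Qed.

Lemma expressibleT : expressible (fun _ => True).
Proof. by exists (feq (tvar L 0) (tvar L 0)). Qed.

Lemma expressibleN P : expressible P -> expressible (fun v => ~ P v).
Proof. by move=> [phi Pphi]; exists (fneg phi) => v /=; rewrite Pphi. Qed.

Lemma expressibleI P Q : expressible P -> expressible Q -> expressible (fun v => P v /\ Q v).
Proof. by move=> [phi Pphi] [psi Qpsi]; exists (fand phi psi) => v /=; rewrite Pphi Qpsi. Qed.

Lemma expressible_ex1 P i : expressible P -> expressible (fun v => exists a, P (upd v i a)).
Proof. by move=> [phi Pphi]; exists (fex i phi) => v /=; split=> -[a]; exists a; apply/Pphi. Qed.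

Lemma expressible_rename P s : injective s -> expressible P -> expressible (fun v => P (v \o s)).
Proof. by move=> s_inj [phi Pphi]; exists (formula_rename s phi) => v; rewrite sat_rename. Qed.

Lemma expressible_bigI (P : nat -> (nat -> M) -> Prop) N :
  (forall i, expressible (P i)) -> expressible (fun v => forall i, i < N -> P i v).
Proof.
move=> Pe; elim: N => [|N IH]; first by apply: expressible_ext expressibleT => v.
apply: expressible_ext (expressibleI IH (Pe N)) => v; split.
- by move=> [Pv PNv] i; rewrite ltnS leq_eqVlt => /orP [/eqP ->|/Pv].
- by move=> Pv; split=> [i /ltnW|]; apply: Pv.
Qed.

(* used to quantify over the block of variables [lo <= i < hi] at once *)
Definition overwrite (v w : nat -> M) (lo hi : nat) : nat -> M :=
  fun i => if (lo <= i) && (i < hi) then w i else v i.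

Lemma expressible_ex_block P lo r :
  expressible P -> expressible (fun v => exists w, P (overwrite v w lo (lo + r))).
Proof.
move=> Pe; elim: r => [|r IH].
  apply: expressible_ext Pe => v; rewrite addn0.
  have overwrite0 w : overwrite v w lo lo = v.
    by apply: funext => i; rewrite /overwrite; case: leqP => //= /leq_gtF ->.
  by split=> [Pv|[w]]; [exists v|]; rewrite overwrite0.
have E v w a : overwrite (upd v (lo + r) a) w lo (lo + r) =
               overwrite v (upd w (lo + r) a) lo (lo + r).+1.
  apply: funext => i; rewrite /overwrite /upd ltnS.
  by case: (ltngtP i (lo + r)) => [||->]; rewrite ?leq_addr ?andbF ?andbT.
apply: expressible_ext (expressible_ex1 (lo + r) IH) => v; split.
- by move=> [a [w Pw]]; exists (upd w (lo + r) a); rewrite addnS -E.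
- move=> [w Pw]; exists (w (lo + r)), w; rewrite E -addnS.
  by congr P: Pw; congr overwrite; apply: funext => i; rewrite /upd; case: eqP => // ->.
Qed.

Lemma expressible_all_block P lo r :
  expressible P -> expressible (fun v => forall w, P (overwrite v w lo (lo + r))).
Proof.
move=> Pe; apply: expressible_ext (expressibleN (expressible_ex_block lo r (expressibleN Pe))).
move=> v; split=> [nP w|Pv [w]]; last exact.
by apply: contrapT => nPw; apply: nP; exists w.
Qed.

Lemma expressible_subst P N (g : nat -> nat) :
  expressible P -> supported_in N P -> expressible (fun v => P (v \o g)).
Proof.
move=> Pe Psupp.
pose H := (\max_(i < N) (g i).+1)%N.
have gH i : i < N -> g i < H.
  by move=> iN; exact: (@leq_bigmax _ (fun i : 'I_N => (g i).+1) (Ordinal iN)).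
(* copy the variables [g i] to the fresh block [H + i] and evaluate [P] there *)
pose Q v := (forall i, i < N -> v (H + i) = v (g i)) /\ P (fun i => v (H + i)).
have Qe : expressible Q.
  apply: expressibleI; first by apply: expressible_bigI => i; apply: expressible_eq.
  by apply: expressible_rename Pe; exact: addnI.
apply: expressible_ext (expressible_ex_block H N Qe) => v; rewrite /Q /overwrite; split.
- move=> [w [wg Pw]]; apply/(Psupp _ _ _).1: Pw => i iN.
  by rewrite wg // leqNgt gH.
- move=> Pv; exists (fun i => v (g (i - H))); split.
  + by move=> i iN; rewrite leq_addr ltn_add2l iN /= addKn leqNgt gH.
  + by apply/(Psupp _ (v \o g)) => // i iN; rewrite leq_addr ltn_add2l iN /= addKn.
Qed.

Lemma expressible_closure phi N :
  expressible (fun v => forall v', (forall i, i < N -> v' i = v i) -> sat v' phi).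
Proof.
apply: expressible_ext (expressible_all_block N (formula_bound phi) (expressible_sat phi)) => v.
split=> [sv v' v'v|sv w]; last by apply: sv => i iN; rewrite /overwrite leqNgt iN.
apply/(sat_eq_on _).1: (sv v') => i ib; rewrite /overwrite.
by case: (ltnP i N) => [iN|Ni] /=; [rewrite v'v | rewrite (leq_trans ib (leq_addl _ _))].
Qed.

Lemma supported_in_subst N N' P (g : nat -> nat) :
  supported_in N P -> (forall i, i < N -> g i < N') -> supported_in N' (fun v => P (v \o g)).
Proof. by move=> Psupp gN v v' vv'; apply: Psupp => i iN; apply: vv'; apply: gN. Qed.

End Expressible.

Lemma join_lshift T n m (x : 'I_n -> T) (y : 'I_m -> T) i : join x y (lshift m i) = x i.
Proof. by rewrite /join (unsplitK (inl i)). Qed.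

Lemma join_rshift T n m (x : 'I_n -> T) (y : 'I_m -> T) i : join x y (rshift n i) = y i.
Proof. by rewrite /join (unsplitK (inr i)). Qed.

Lemma join_inj T n m (x x' : 'I_n -> T) (y y' : 'I_m -> T) :
  join x y = join x' y' -> x = x' /\ y = y'.
Proof.
move=> E; split; apply: funext => i.
- by rewrite -(join_lshift x y) -(join_lshift x' y') E.
- by rewrite -(join_rshift x y) -(join_rshift x' y') E.
Qed.

Lemma definable_in_mono L (M : lstructure L) (A A' : set M) n (X : set ('I_n -> M)) :
  A `<=` A' -> definable_in A X -> definable_in A' X.
Proof. by move=> AA' [phi [k [b [Ab ->]]]]; exists phi, k, b; split => // j; apply: AA'. Qed.

Lemma definable_inst1 L (M : lstructure L) (phi : formula L) k (b : 'I_k -> M) :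
  definable_in setT [set y : 'I_1 -> M | inst1 phi b (y ord0)].
Proof.
exists phi, k, b; split => //; apply/seteqP; split => y /=.
- by move=> phib v v0 vb; apply: phib; rewrite ?(v0 ord0).
- move=> phiy v v0 vb; apply: phiy => // -[[|//] i0].
  by rewrite v0; congr y; apply: val_inj.
Qed.

Section Definable.
Variables (L : language) (M : lstructure L).
(* Over an empty structure every definable set is full ([definable_in]
   quantifies over all valuations [nat -> M]), so the closure properties
   below need an inhabitant. *)
Variable d : M.

Definition env n k (x : 'I_n -> M) (b : 'I_k -> M) : nat -> M :=
  fun i => match (insub i : option 'I_n) with
           | Some j => x j
           | None => if (insub (i - n) : option 'I_k) is Some j then b j else d
           end.

Lemma env_x n k (x : 'I_n -> M) (b : 'I_k -> M) (j : 'I_n) : env x b j = x j.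
Proof. by rewrite /env valK. Qed.

Lemma env_b n k (x : 'I_n -> M) (b : 'I_k -> M) (j : 'I_k) : env x b (n + j) = b j.
Proof. by rewrite /env insubF ?addKn ?valK // ltnNge leq_addr. Qed.

Lemma agree_envP n k (x : 'I_n -> M) (b : 'I_k -> M) (v : nat -> M) :
  ((forall i : 'I_n, v i = x i) /\ (forall j : 'I_k, v (n + j) = b j)) <->
  (forall i, i < n + k -> v i = env x b i).
Proof.
split=> [[vx vb] i ink|venv]; last first.
  by split=> [i|j]; rewrite venv ?env_x ?env_b // ?ltn_add2l ?ltn_addr.
case: (ltnP i n) => [iLn|nLi]; first by rewrite (vx (Ordinal iLn)) -(env_x x b (Ordinal iLn)).
have ink' : i - n < k by rewrite ltn_subLR.
by have := vb (Ordinal ink'); rewrite -(env_b x b (Ordinal ink')) /= subnKC.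
Qed.

Lemma env_eq_on n k (x : 'I_n -> M) (b : 'I_k -> M) (v : nat -> M) :
  (forall j : 'I_n, v j = x j) -> (forall j : 'I_k, v (n + j) = b j) ->
  forall i, i < n + k -> v i = env x b i.
Proof. by move=> vx vb; apply/agree_envP. Qed.

(* The formula is replaced by any expressible property of valuations that only
   looks at the [n] coordinates and the [k] parameters. *)
Definition fdefinable (A : set M) n (X : set ('I_n -> M)) :=
  exists k (b : 'I_k -> M) (P : (nat -> M) -> Prop),
    [/\ forall j, A (b j), expressible P, supported_in (n + k) P & forall x, X x <-> P (env x b)].

Lemma definable_inE A n (X : set ('I_n -> M)) : definable_in A X <-> fdefinable A X.
Proof.
split=> [[phi [k [b [Ab ->]]]]|[k [b [P [Ab [phi Pphi] Psupp XP]]]]].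
  exists k, b, (fun v => forall v', (forall i, i < n + k -> v' i = v i) -> sat v' phi).
  split=> //; first exact: expressible_closure.
    by move=> v v' vv'; split=> sv w wv; apply: sv => i ink; rewrite wv // vv'.
  move=> x /=; split=> [xphi v' /agree_envP [vx vb]|phix v vx vb]; first exact: xphi.
  by apply: phix; apply/agree_envP.
exists phi, k, b; split => //; apply/seteqP; split => x /=.
- move=> /XP Px v vx vb; apply/Pphi/(Psupp v (env x b)) => //; exact/agree_envP.
- by move=> xphi; apply/XP/Pphi/xphi; [exact: env_x | exact: env_b].
Qed.

Lemma definableT A n : definable_in A (@setT ('I_n -> M)).
Proof.
apply/definable_inE; exists 0, (fun _ => d), (fun _ => True).
by split=> //; [case | exact: expressibleT].
Qed.

Lemma definableC A n (X : set ('I_n -> M)) : definable_in A X -> definable_in A (~` X).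
Proof.
move=> /definable_inE [k [b [P [Ab Pe Psupp XP]]]]; apply/definable_inE.
exists k, b, (fun v => ~ P v); split=> //; first exact: expressibleN.
  by move=> v v' vv'; rewrite (Psupp v v' vv').
by move=> x /=; rewrite XP.
Qed.

Lemma definableI A n (X Y : set ('I_n -> M)) :
  definable_in A X -> definable_in A Y -> definable_in A (X `&` Y).
Proof.
move=> /definable_inE [k1 [b1 [P1 [Ab1 P1e P1s XP1]]]].
move=> /definable_inE [k2 [b2 [P2 [Ab2 P2e P2s YP2]]]]; apply/definable_inE.
(* the parameters of [Y] are shifted past those of [X] *)
pose sh i := if i < n then i else i + k1.
exists (k1 + k2), (join b1 b2), (fun v => P1 v /\ P2 (v \o sh)); split.
- by move=> j; rewrite /join; case: (split j).
- exact: expressibleI (expressible_subst _ P2e P2s).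
- move=> v v' vv'; rewrite (P1s v v'); last by move=> i ik; apply: vv'; lia.
  suff -> : P2 (v \o sh) <-> P2 (v' \o sh) by [].
  by apply: P2s => i ik; apply: vv'; rewrite /sh; case: ifP; lia.
- move=> x /=; rewrite XP1 YP2 (P1s (env x (join b1 b2)) (env x b1)); last first.
    apply: env_eq_on => j; first by rewrite env_x.
    by rewrite -[n + j]/(n + lshift k2 j) env_b join_lshift.
  suff -> : P2 (env x b2) <-> P2 (env x (join b1 b2) \o sh) by [].
  apply: P2s => i ik; symmetry; move: i ik; apply: env_eq_on => j; rewrite /= /sh.
    by rewrite ltn_ord env_x.
  rewrite ltnNge leq_addr /= addnAC -addnA -[k1 + j]/(nat_of_ord (rshift k1 j)).
  by rewrite env_b join_rshift.
Qed.

Lemma definable_comp A p q (pi : 'I_q -> 'I_p) (D : set ('I_q -> M)) :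
  definable_in A D -> definable_in A [set y : 'I_p -> M | D (y \o pi)].
Proof.
move=> /definable_inE [k [b [P [Ab Pe Psupp DP]]]]; apply/definable_inE.
pose g i := if (insub i : option 'I_q) is Some j then nat_of_ord (pi j) else p + (i - q).
exists k, b, (fun v => P (v \o g)); split=> //.
- exact: expressible_subst Pe Psupp.
- apply: supported_in_subst Psupp _ => i ik; rewrite /g.
  case: insubP => [j _ _|]; first exact: leq_trans (ltn_ord _) (leq_addr _ _).
  by rewrite -leqNgt; lia.
- move=> y /=; rewrite DP; apply: Psupp => i ik; symmetry; move: i ik.
  apply: env_eq_on => j; first by rewrite /= /g valK env_x.
  by rewrite /= /g insubF ?addKn ?env_b // ltnNge leq_addr.
Qed.

Lemma definable_proj A p q (Z : set ('I_(p + q) -> M)) :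
  definable_in A Z -> definable_in A [set y : 'I_p -> M | exists w, Z (join y w)].
Proof.
move=> /definable_inE [k [b [P [Ab Pe Psupp ZP]]]]; apply/definable_inE.
(* the witness [w] is stored in the block of variables [p + k <= i < p + k + q] *)
pose H := p + k.
pose g i := if (insub i : option 'I_p) is Some j then nat_of_ord j
            else if (insub (i - p) : option 'I_q) is Some j then H + j else i - q.
pose Q v := P (v \o g).
have Qsupp : supported_in (H + q) Q.
  apply: supported_in_subst Psupp _ => i ik; rewrite /g.
  case: insubP => [j _ _|]; first by move: (ltn_ord j); lia.
  case: insubP => [j _ _|]; first by move: (ltn_ord j); lia.
  by rewrite -!leqNgt; lia.
have QZ y w : Q (overwrite (env y b) w H (H + q)) <-> Z (join y (fun j => w (H + j))).
  rewrite ZP /Q; apply: Psupp; apply: env_eq_on => j /=.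
  + rewrite /join /g; case: splitP => j' ->.
      by rewrite valK /overwrite leqNgt (leq_trans (ltn_ord j') (leq_addr _ _)) env_x.
    rewrite insubF ?addKn ?valK; last by rewrite ltnNge leq_addr.
    by rewrite /overwrite leq_addr ltn_add2l ltn_ord.
  + rewrite /g insubF; last by rewrite ltnNge -addnA leq_addr.
    rewrite insubF; last by rewrite -addnA addKn ltnNge leq_addr.
    have -> : p + q + j - q = p + j by lia.
    by rewrite /overwrite leqNgt /H ltn_add2l ltn_ord env_b.
exists k, b, (fun v => exists w, Q (overwrite v w H (H + q))); split=> //.
- exact: expressible_ex_block (expressible_subst _ Pe Psupp).
- move=> v v' vv'.
  have E w : Q (overwrite v w H (H + q)) <-> Q (overwrite v' w H (H + q)).
    apply: Qsupp => i iHq; rewrite /overwrite; case: ifP => // /negbT.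
    by rewrite negb_and iHq orbF -ltnNge => /vv'.
  by split=> -[w Qw]; exists w; apply/E.
- move=> y /=; split=> [[w Zw]|[w /QZ Zw]]; last by exists (fun j => w (H + j)).
  exists (fun i => if (insub (i - H) : option 'I_q) is Some j then w j else d).
  by apply/QZ; congr Z: Zw; congr join; apply: funext => j; rewrite addKn valK.
Qed.

Lemma definable_diag A : definable_in A [set y : 'I_2 -> M | y ord0 = y ord_max].
Proof.
apply/definable_inE; exists 0, (fun _ => d), (fun v => v 0 = v 1).
split=> [[]//||v v' vv'|y]; first exact: expressible_eq.
  by rewrite !vv'.
by rewrite /= -(env_x y (fun _ : 'I_0 => d) ord0) -(env_x y (fun _ : 'I_0 => d) ord_max).
Qed.

Lemma definable_bigI A n r (X : 'I_r -> set ('I_n -> M)) :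
  (forall i, definable_in A (X i)) -> definable_in A [set y | forall i, X i y].
Proof.
move=> Xdef.
suff sdef (s : seq 'I_r) : definable_in A [set y | forall i, i \in s -> X i y].
  have -> : [set y | forall i, X i y] = [set y | forall i, i \in enum 'I_r -> X i y].
    by apply/seteqP; split=> y /= Xy i => [_|]; apply: Xy; rewrite ?mem_enum.
  exact: sdef.
elim: s => [|i s IH].
  have -> : [set y | forall i, i \in [::] -> X i y] = setT by apply/seteqP; split.
  exact: definableT.
have -> : [set y | forall j, j \in i :: s -> X j y] = X i `&` [set y | forall j, j \in s -> X j y].
  apply/seteqP; split=> y /= => [Xy|[Xiy Xy] j]; last by rewrite in_cons => /orP [/eqP ->|/Xy].
  by split=> [|j js]; apply: Xy; rewrite in_cons ?eqxx ?js ?orbT.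
exact: definableI.
Qed.

End Definable.

Definition box (T : Type) p (O : 'I_p -> set T) : set ('I_p -> T) :=
  [set y | forall i, O i (y i)].

Lemma finite_box T n (O : 'I_n -> set T) :
  (forall i, finite_set (O i)) -> finite_set (box O).
Proof.
elim: n O => [|n IH] O Ofin.
  case: (pselect (exists y, box O y)) => [[y0 _]|noO].
    by apply: (sub_finite_set _ (finite_set1 y0)) => y _; apply: funext => -[].
  by apply: (sub_finite_set _ (finite_set0 _)) => y Oy; apply: noO; exists y.
pose cons (p : T * ('I_n -> T)) (i : 'I_n.+1) :=
  if unlift ord0 i is Some i' then p.2 i' else p.1.
apply: (sub_finite_set _ (finite_image cons
  (finite_setX (Ofin ord0) (IH (fun i => O (lift ord0 i)) (fun i => Ofin _))))).
move=> y Oy; exists (y ord0, fun i => y (lift ord0 i)); first by split=> //= i; apply: Oy.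
by apply: funext => i; rewrite /cons; case: unliftP => [i' ->|->].
Qed.

Lemma definable_box L (M : lstructure L) (d : M) A p (O : 'I_p -> set M) :
  (forall i, definable_in A [set t : 'I_1 -> M | O i (t ord0)]) -> definable_in A (box O).
Proof.
by move=> Odef; apply: (definable_bigI d) => i; exact: (definable_comp d (fun=> i) (Odef i)).
Qed.

Section Acl.
Variables (L : language) (M : lstructure L).

Lemma acl_in_mono (A A' : set M) a : A `<=` A' -> acl_in A a -> acl_in A' a.
Proof. by move=> AA' [D [Ddef Dfin_a]]; exists D; split=> //; exact: definable_in_mono Ddef. Qed.

Lemma acl_in_mem (A : set M) a : A a -> acl_in A a.
Proof.
move=> Aa; exists [set fun=> a]; split; last by split=> //; exact: finite_set1.
exists (feq (tvar L 0) (tvar L 1)), 1, (fun=> a); split=> //.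
apply/seteqP; split=> t /=; first by move=> -> v v0 va /=; rewrite (v0 ord0) -(va ord0).
move=> tvar_eq; apply: funext => i; rewrite (ord1 i).
apply: (tvar_eq (fun j => if j == 0 then t ord0 else a)) => // -[[|//] i0] /=.
by congr t; apply: val_inj.
Qed.

Definition acl_independent (B : set M) k (c : 'I_k -> M) :=
  forall i, ~ acl_in (B `|` (fun y => exists j, j != i /\ y = c j)) (c i).

Lemma acl_independent_inj B k (c : 'I_k -> M) : acl_independent B c -> injective c.
Proof.
move=> cind i j cij; case: (eqVneq i j) => // ij; case: (cind i).
by apply: acl_in_mem; right; exists j; rewrite eq_sym.
Qed.

(* [c] lies in the acl-closure of [B] and [u], stated without a closure operator *)
Definition acl_spanned (B : set M) n (u : 'I_n -> M) k (c : 'I_k -> M) :=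
  forall C, B `<=` C -> (forall l, acl_in C (u l)) -> forall i, acl_in C (c i).

Hypothesis exch : acl_exchange M.

Lemma acl_independent_set B k (c : 'I_k -> M) i0 a :
  acl_independent B c -> ~ acl_in (B `|` (fun y => exists j, j != i0 /\ y = c j)) a ->
  acl_independent B (fun i => if i == i0 then a else c i).
Proof.
move=> cind a_free i; case: (eqVneq i i0) => [->|ii0] c'acl.
  apply: a_free; apply: acl_in_mono c'acl => y [By|[j [ji0 ->]]]; first by left.
  by right; exists j; rewrite (negbTE ji0).
pose C := B `|` (fun y => exists j, [/\ j != i, j != i0 & y = c j]).
have ci_a : acl_in (C `|` [set a]) (c i).
  apply: acl_in_mono c'acl => y [By|[j [ji ->]]]; first by left; left.
  by case: (eqVneq j i0) => [_|ji0]; [right | left; right; exists j].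
have ci_C : ~ acl_in C (c i).
  by move=> ciC; apply: (cind i); apply: acl_in_mono ciC => y [By|[j [ji _ ->]]];
    [left | right; exists j].
apply: a_free; apply: acl_in_mono (exch ci_a ci_C) => y [[By|[j [_ ji0 ->]]]|->].
- by left.
- by right; exists j.
- by right; exists i.
Qed.

Lemma acl_independent_in_span B n (u : 'I_n -> M) k (c : 'I_k -> M) :
  acl_independent B c -> acl_spanned B u c ->
  exists c' : 'I_k -> M, acl_independent B c' /\ forall i, exists l, c' i = u l.
Proof.
move=> cind cspan.
suff /(_ k (leqnn k)) [c' [c'ind _ c'u]] : forall r, r <= k ->
    exists c' : 'I_k -> M, [/\ acl_independent B c', acl_spanned B u c' &
      forall i : 'I_k, i < r -> exists l, c' i = u l].
  by exists c'; split=> // i; apply: c'u.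
elim=> [|r IH] rk; first by exists c; split.
have [c' [c'ind c'span c'u]] := IH (ltnW rk); pose i0 := Ordinal rk.
case: (pselect (exists l, c' i0 = u l)) => [c'i0|c'i0_new].
  exists c'; split=> // i; rewrite ltnS leq_eqVlt => /orP [/eqP ii0|/c'u //].
  by rewrite (_ : i = i0) //; apply: val_inj.
have [l ul_free] : exists l, ~ acl_in (B `|` (fun y => exists j, j != i0 /\ y = c' j)) (u l).
  apply: contrapT => ul_acl; apply: (c'ind i0); apply: c'span => [y|l]; first by left.
  by apply: contrapT => ul_free; apply: ul_acl; exists l.
exists (fun i => if i == i0 then u l else c' i); split.
- exact: acl_independent_set.
- by move=> C BC uC i; case: ifP => _; [exact: uC | exact: c'span].
- move=> i; case: eqP => [_ _|ii0]; first by exists l.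
  rewrite ltnS leq_eqVlt => /orP [/eqP ir|/c'u //]; by case: ii0; apply: val_inj.
Qed.

Lemma dim_ge_joinl n m (x : 'I_n -> M) (y : 'I_m -> M) A k :
  dim_ge x A k -> dim_ge (join x y) A k.
Proof.
move=> [s [s_inj sind]]; exists (fun i => lshift m (s i)); split.
  by move=> i j /lshift_inj /s_inj.
have E : (fun i => join x y (lshift m (s i))) = x \o s by apply: funext => i; rewrite join_lshift.
have : acl_independent A (x \o s) by [].
by rewrite -E.
Qed.

Lemma dim_ge_join_spanned B n m (u : 'I_n -> M) (w : 'I_m -> M) k :
  acl_spanned B u w -> dim_ge (join u w) B k -> dim_ge u B k.
Proof.
move=> wspan [s [s_inj sind]].
have [c' [c'ind c'u]] : exists c' : 'I_k -> M,
    acl_independent B c' /\ forall i, exists l, c' i = u l.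
  apply: (acl_independent_in_span sind) => C BC uC i.
  by rewrite /join; case: (split (s i)) => j; [exact: uC | exact: wspan].
have [s' c's'] := choice c'u.
exists s'; split; first by move=> i j sij; apply: (acl_independent_inj c'ind); rewrite !c's' sij.
have E : u \o s' = c' by apply: funext => i; rewrite /= c's'.
by move: c'ind; rewrite -E.
Qed.

End Acl.

Section Graph.
Variables (L : language) (M : lstructure L) (d : M).
Variables (n m : nat) (X : set ('I_n -> M)) (f : ('I_n -> M) -> ('I_m -> M)).

Lemma graph_on_join u : X u -> graph_on f X (join u (f u)).
Proof. by move=> Xu; exists u. Qed.

Lemma definable_graph_dom (B : set M) : definable_in B (graph_on f X) -> definable_in B X.
Proof.
move=> /(definable_proj d); congr definable_in; apply/seteqP; split=> u /=.
- by move=> [w [u' [Xu' /join_inj [-> _]]]].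
- by move=> Xu; exists (f u), u.
Qed.

Lemma acl_spanned_graph (B : set M) u :
  definable_in B (graph_on f X) -> X u -> acl_spanned B u (f u).
Proof.
move=> Gdef Xu C BC uC j.
have [E Eu] := choice uC.
pose O l := [set a | E l (fun=> a)].
have Odef : definable_in C (box O).
  apply: (definable_box d) => l; have [Edef _] := Eu l; congr definable_in: Edef.
  have t_const (t : 'I_1 -> M) : (fun=> t ord0) = t by apply: funext => i; rewrite (ord1 i).
  by apply/seteqP; split=> t; rewrite /O /= t_const.
have Ofin : finite_set (box O).
  apply: finite_box => l; have [_ [Efin _]] := Eu l.
  apply: sub_finite_set (finite_image (fun t : 'I_1 -> M => t ord0) Efin) => a Ela.
  by exists (fun=> a).
(* [f u j] lies in the finite [C]-definable set of the [f u' j] with [u'] in [X] and [box O] *)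
pose ends (i : 'I_2) : 'I_(1 + (n + m)) :=
  if i == ord0 then lshift _ ord0 else rshift 1 (rshift n j).
pose Z := [set z : 'I_(1 + (n + m)) -> M | (box O (fun l => z (rshift 1 (lshift m l))) /\
            graph_on f X (fun i => z (rshift 1 i))) /\ z (ends ord0) = z (ends ord_max)].
have Zdef : definable_in C Z.
  apply: (definableI d); last exact: (definable_comp d ends (definable_diag d C)).
  apply: (definableI d); first exact: (definable_comp d _ Odef).
  exact: (definable_comp d _ (definable_in_mono BC Gdef)).
exists [set t : 'I_1 -> M | exists z, Z (join t z)]; split; first exact: (definable_proj d).
split.
- apply: sub_finite_set (finite_image (fun u' => fun=> f u' j) Ofin).
  move=> t [z [[Oz [u' [_ zu']]] tz]].
  have {zu'} zE : z = join u' (f u') by rewrite -zu'; apply: funext => i; rewrite join_rshift.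
  subst z.
  exists u'; first by move=> l; have := Oz l; rewrite join_rshift join_lshift.
  apply: funext => i; rewrite (ord1 i).
  by move: tz; rewrite /ends /= join_lshift !join_rshift => ->.
- exists (join u (f u)); split; [split|].
  + by move=> l; rewrite join_rshift join_lshift; have [_ []] := Eu l.
  + suff -> : (fun i => join (fun=> f u j) (join u (f u)) (rshift 1 i)) = join u (f u).
      exact: graph_on_join.
    by apply: funext => i; rewrite join_rshift.
  + by rewrite /ends /= join_lshift !join_rshift.
Qed.

End Graph.

Section Dimension.
Local Open Scope ring_scope.

Lemma dim_tuple_le_dim_set L (M : lstructure L) n (A : set M) (W : set ('I_n -> M)) a :
  countable A -> definable_in A W -> W a -> (dim_tuple a A)%:Z <= dim_set W.
Proof.
move=> cA Wdef Wa; rewrite /dim_set asboolF => [|W0]; last by rewrite W0 in Wa.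
rewrite lez_nat; apply/bigmax_leqP => k ak.
apply: (@leq_bigmax_cond _ _ (fun k : 'I_n.+1 => nat_of_ord k) k).
by apply: asboolT; exists A; do 2!split=> //; exists a => //; apply/asboolP.
Qed.

Lemma dim_tuple_joinl L (M : lstructure L) n m (A : set M) (x : 'I_n -> M) (y : 'I_m -> M) :
  (dim_tuple x A <= dim_tuple (join x y) A)%N.
Proof.
apply/bigmax_leqP => k /asboolP xk.
have knm : (k < (n + m).+1)%N by rewrite ltnS (leq_trans _ (leq_addr _ _)) // -ltnS.
apply: (@leq_bigmax_cond _ _ (fun k : 'I_(n + m).+1 => nat_of_ord k) (Ordinal knm)).
exact/asboolT/dim_ge_joinl.
Qed.

Variables (L : language) (M : lstructure L) (d : M).
Hypothesis exch : acl_exchange M.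
Variables (n m : nat) (X : set ('I_n -> M)) (f : ('I_n -> M) -> ('I_m -> M)).

Lemma dim_set_graph_le x0 : X x0 -> dim_set (graph_on f X) <= dim_set X.
Proof.
move=> Xx0; rewrite /dim_set asboolF => [|G0]; last first.
  by have := graph_on_join f Xx0; rewrite G0.
rewrite asboolF => [|X0]; last by rewrite X0 in Xx0.
rewrite lez_nat; apply/bigmax_leqP => k /asboolP [B [cB [Gdef [_ [u [Xu ->]] uk]]]].
have {}uk : dim_ge u B k.
  exact: dim_ge_join_spanned (acl_spanned_graph d Gdef Xu) uk.
have kn : (k < n.+1)%N.
  by have [s [s_inj _]] := uk; have := leq_card s s_inj; rewrite !card_ord.
apply: (@leq_bigmax_cond _ _ (fun k : 'I_n.+1 => nat_of_ord k) (Ordinal kn)).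
apply: asboolT; exists B; do 2!split=> //; first exact: (definable_graph_dom d Gdef).
by exists u.
Qed.

Lemma generic_graph (A : set M) x :
  countable A -> definable_in A (graph_on f X) -> generic A X x ->
  dim_set (graph_on f X) = dim_set X /\ generic A (graph_on f X) (join x (f x)).
Proof.
move=> cA Gdef [Xx xgen].
have Gx := graph_on_join f Xx.
have le_X_xfx : dim_set X <= (dim_tuple (join x (f x)) A)%:Z.
  by rewrite -xgen lez_nat dim_tuple_joinl.
have le_xfx_G := dim_tuple_le_dim_set cA Gdef Gx.
have dimG : dim_set (graph_on f X) = dim_set X.
  by apply: le_anti; rewrite (dim_set_graph_le Xx) (le_trans le_X_xfx le_xfx_G).
by split=> //; split=> //; apply: le_anti; rewrite le_xfx_G dimG le_X_xfx.
Qed.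

End Dimension.

Section ProductTopology.
Variables (T : Type) (tau : set (set T)).

Lemma prod_open_box p (O : 'I_p -> set T) : (forall i, tau (O i)) -> prod_open tau (box O).
Proof. by move=> Oopen y Oy; exists O; split=> // i; split. Qed.

Lemma prod_openI p (W W' : set ('I_p -> T)) : is_topology tau ->
  prod_open tau W -> prod_open tau W' -> prod_open tau (W `&` W').
Proof.
move=> [_ tauI _] Wopen W'open y [Wy W'y].
have [V [Vopen VW]] := Wopen y Wy; have [V' [V'open V'W']] := W'open y W'y.
exists (fun i => V i `&` V' i); split.
- by move=> i; have [? ?] := Vopen i; have [? ?] := V'open i; split; [apply: tauI|].
- by move=> z VV'z; split; [apply: VW | apply: V'W'] => i; case: (VV'z i).
Qed.

Lemma continuous_on_preimage p q (h : ('I_p -> T) -> ('I_q -> T)) (D : set ('I_p -> T)) W :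
  continuous_on tau h D -> prod_open tau W ->
  exists W', prod_open tau W' /\ forall v, D v -> (W (h v) <-> W' v).
Proof.
move=> hcont Wopen.
exists (fun v => exists O, [/\ prod_open tau O, O v & forall u, D u -> O u -> W (h u)]); split.
  move=> v [O [Oopen Ov OW]]; have [V [Vopen VO]] := Oopen v Ov.
  by exists V; split=> // z Vz; exists O; split=> //; apply: VO.
move=> v Dv; split=> [Whv|[O [_ Ov OW]]]; last exact: OW.
by have [O [Oopen Ov OW]] := hcont v Dv W Wopen Whv; exists O.
Qed.

Lemma homeo_on_eq n m (f g : ('I_n -> T) -> ('I_m -> T)) U V :
  (forall u, U u -> f u = g u) -> homeo_on tau g U V -> homeo_on tau f U V.
Proof.
move=> fg [gUV gcont [h [hVU hg gh hcont]]]; split.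
- by move=> u Uu; rewrite fg //; apply: gUV.
- move=> u Uu W Wopen; rewrite fg // => Wgu; have [O [Oopen Ou OW]] := gcont u Uu W Wopen Wgu.
  by exists O; split=> // u' Uu' Ou'; rewrite fg //; apply: OW.
- by exists h; split=> // [u Uu|v Vv]; rewrite fg ?hg ?gh //; apply: hVU.
Qed.

Lemma homeo_on_sub n m (f : ('I_n -> T) -> ('I_m -> T)) U0 V0 U :
  homeo_on tau f U0 V0 -> U `<=` U0 -> homeo_on tau f U (f @` U).
Proof.
move=> [fUV fcont [h [_ hf _ hcont]]] UU0; split.
- by move=> u Uu; exists u.
- move=> u Uu W Wopen Wfu; have [O [Oopen Ou OW]] := fcont u (UU0 u Uu) W Wopen Wfu.
  by exists O; split=> // u' /UU0; apply: OW.
exists h; split.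
- by move=> _ [u Uu <-]; rewrite hf //; apply: UU0.
- by move=> u /UU0; apply: hf.
- by move=> _ [u Uu <-]; rewrite hf //; apply: UU0.
- move=> _ [u /UU0 U0u <-] W Wopen Whfu.
  have [O [Oopen Ofu OW]] := hcont (f u) (fUV u U0u) W Wopen Whfu.
  by exists O; split=> // _ [u' /UU0 U0u' <-]; apply/OW/fUV.
Qed.

Lemma rel_open_homeo_image n m (f : ('I_n -> T) -> ('I_m -> T)) X Y U0 V0 U :
  is_topology tau -> homeo_on tau f U0 V0 -> U0 `<=` X -> rel_open tau Y V0 ->
  rel_open tau X U -> U `<=` U0 -> rel_open tau Y (f @` U).
Proof.
move=> topo [fUV _ [h [hVU hf fh hcont]]] U0X [V0Y [WV [WVopen V0E]]] [_ [WU [WUopen UE]]] UU0.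
split; first by move=> _ [u /UU0 /fUV V0fu <-]; apply: V0Y.
have [W [Wopen WE]] := continuous_on_preimage hcont WUopen.
exists (W `&` WV); split; first exact: prod_openI.
apply/seteqP; split=> [_ [u Uu <-]|v [[Wv WVv] Yv]].
  have V0fu := fUV u (UU0 u Uu); move: (V0fu); rewrite V0E => -[WVfu Yfu].
  split=> //; split=> //; apply/WE => //; rewrite hf; last exact: UU0.
  by move: Uu; rewrite UE => -[].
have V0v : V0 v by rewrite V0E.
exists (h v); last exact: fh.
by rewrite UE; split; [apply/WE | apply/U0X/hVU].
Qed.

Lemma rel_open_preimage n m (f : ('I_n -> T) -> ('I_m -> T)) X U0 C1 C2 :
  is_topology tau -> rel_open tau X U0 -> continuous_on tau f U0 ->
  prod_open tau C1 -> prod_open tau C2 -> C1 `&` X `<=` U0 ->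
  rel_open tau X [set u | X u /\ C1 u /\ C2 (f u)].
Proof.
move=> topo [U0X _] fcont C1open C2open C1XU0; split; first by move=> u [].
have [W2 [W2open W2E]] := continuous_on_preimage fcont C2open.
exists (W2 `&` C1); split; first exact: prod_openI.
apply/seteqP; split=> [u [Xu [C1u C2fu]]|u [[W2u C1u] Xu]].
  by split=> //; split=> //; apply/W2E => //; apply: C1XU0.
by split=> //; split=> //; apply/W2E => //; apply: C1XU0.
Qed.

End ProductTopology.

Lemma box_join T n m (O1 : 'I_n -> set T) (O2 : 'I_m -> set T) u w :
  box (join O1 O2) (join u w) <-> box O1 u /\ box O2 w.
Proof.
split=> [Ouw|[O1u O2w] i]; last by rewrite /join; case: (split i).
split=> j; first by have := Ouw (lshift m j); rewrite !join_lshift.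
by have := Ouw (rshift n j); rewrite !join_rshift.
Qed.

Section DefinableOpenBox.
Variables (L : language) (R : lstructure L) (tau : set (set R)) (d : R).
Hypothesis topo : is_topology tau.

Definition definable_open_box p (O : 'I_p -> set R) :=
  forall i, tau (O i) /\ definable_in setT [set t : 'I_1 -> R | O i (t ord0)].

Lemma definable_open_boxI p (O O' : 'I_p -> set R) :
  definable_open_box O -> definable_open_box O' -> definable_open_box (fun i => O i `&` O' i).
Proof.
move=> Odob O'dob i; have [Oopen Odef] := Odob i; have [O'open O'def] := O'dob i.
by split; [case: topo => _ + _; apply | exact: definableI].
Qed.

Lemma definable_open_box_join n m (O1 : 'I_n -> set R) (O2 : 'I_m -> set R) :
  definable_open_box O1 -> definable_open_box O2 -> definable_open_box (join O1 O2).
Proof. by move=> O1dob O2dob i; rewrite /join; case: (split i). Qed.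

Lemma prod_open_definable_open_box p (O : 'I_p -> set R) :
  definable_open_box O -> prod_open tau (box O).
Proof. by move=> Odob; apply: prod_open_box => i; case: (Odob i). Qed.

Lemma definable_definable_open_box p (O : 'I_p -> set R) :
  definable_open_box O -> definable_in setT (box O).
Proof. by move=> Odob; apply: (definable_box d) => i; case: (Odob i). Qed.

Lemma definable_open_box_nbhd (phi : formula L) k :
  (forall b : 'I_k -> R, tau (inst1 phi b)) ->
  (forall (U : set R) a, tau U -> U a ->
     exists b : 'I_k -> R, inst1 phi b a /\ inst1 phi b `<=` U) ->
  forall p (W : set ('I_p -> R)) z, prod_open tau W -> W z ->
  exists O : 'I_p -> set R, [/\ definable_open_box O, box O z & box O `<=` W].
Proof.
move=> phi_open phi_basis p W z Wopen Wz; have [V [Vopen VW]] := Wopen z Wz.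
have [b bV] := choice (fun i => phi_basis (V i) (z i) (Vopen i).1 (Vopen i).2).
exists (fun i => inst1 phi (b i)); split=> [i||y Oy].
- by split; [exact: phi_open | exact: definable_inst1].
- by move=> i; case: (bV i).
- by apply: VW => i; apply: (bV i).2.
Qed.

End DefinableOpenBox.

Section LoricGraph.
Variables (L : language) (R : lstructure L) (tau : set (set R)) (d : R).
Variable S : forall n : nat, set (set ('I_n -> R)).
Arguments S : clear implicits.
Hypotheses (topo : is_topology tau) (lor : lore R tau S).
Variables (phi : formula L) (k : nat).
Hypothesis phi_open : forall b : 'I_k -> R, tau (inst1 phi b).
Hypothesis phi_basis : forall (U : set R) a, tau U -> U a ->
  exists b : 'I_k -> R, inst1 phi b a /\ inst1 phi b `<=` U.

Lemma loric_boxI p (O : 'I_p -> set R) (Z : set ('I_p -> R)) :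
  definable_open_box tau O -> definable_in setT Z -> S p Z -> S p (box O `&` Z).
Proof.
move=> Odob Zdef SZ; have [_ _ _ [S_open _] _] := lor; apply: (S_open _ Z) => //.
  by apply: (definableI d) => //; exact: (definable_definable_open_box d).
split=> [z []//|]; exists (box O); split=> //; exact: prod_open_definable_open_box.
Qed.

Lemma loric_graph_nbhd n m (X : set ('I_n -> R)) (f : ('I_n -> R) -> ('I_m -> R)) U0 Z' x :
  rel_open tau X U0 -> U0 x -> continuous_on tau f U0 ->
  rel_open tau (graph_on f X) Z' -> definable_in setT Z' -> S (n + m)%N Z' ->
  Z' (join x (f x)) ->
  exists U, [/\ rel_open tau X U, U x, U `<=` U0 & S (n + m)%N (graph_on f U)].
Proof.
move=> U0open U0x fcont [Z'G [W0 [W0open Z'E]]] Z'def SZ' Z'x.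
have [_ [WU [WUopen U0E]]] := U0open.
have nbhd := definable_open_box_nbhd phi_open phi_basis.
have [O1 [O1dob O1x O1WU]] :
    exists O1, [/\ definable_open_box tau O1, box O1 x & box O1 `<=` WU].
  by apply: nbhd => //; move: U0x; rewrite U0E => -[].
have [O0 [O0dob O0x O0W0]] :
    exists O0, [/\ definable_open_box tau O0, box O0 (join x (f x)) & box O0 `<=` W0].
  by apply: nbhd => //; move: Z'x; rewrite Z'E => -[].
pose Ol := fun i => O1 i `&` O0 (lshift m i).
pose Or := O0 \o @rshift n m.
have Oldob : definable_open_box tau Ol.
  by apply: definable_open_boxI => // i; apply: O0dob.
have Ordob : definable_open_box tau Or by move=> i; apply: O0dob.
have OlOr_O0 : box (join Ol Or) `<=` box O0.
  move=> z Oz i; move: (Oz i); rewrite -(splitK i); case: (split i) => j /=.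
    by rewrite join_lshift => -[].
  by rewrite join_rshift.
have OlXU0 : box Ol `&` X `<=` U0.
  by move=> u [Olu Xu]; rewrite U0E; split=> //; apply: O1WU => i; case: (Olu i).
pose U := [set u | X u /\ box Ol u /\ box Or (f u)].
have GU : graph_on f U = box (join Ol Or) `&` Z'.
  apply/seteqP; split=> [_ [u [Uu ->]]|z [Oz /Z'G [u [Xu zE]]]].
    have [Xu [Olu Orfu]] := Uu; have Oufu : box (join Ol Or) (join u (f u)) by apply/box_join.
    by split=> //; rewrite Z'E; split; [apply/O0W0/OlOr_O0 | apply: graph_on_join].
  by exists u; split=> //; move: Oz; rewrite zE => /box_join.
have SU : S (n + m)%N (graph_on f U).
  by rewrite GU; apply: loric_boxI => //; exact: definable_open_box_join.
exists U; split.
- apply: rel_open_preimage topo U0open fcont _ _ OlXU0;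
    exact: prod_open_definable_open_box.
- split; first by move: U0x; rewrite U0E => -[].
  split=> i; first split; first exact: O1x.
    by have := O0x (lshift m i); rewrite join_lshift.
  by have := O0x (rshift n i); rewrite join_rshift.
- by move=> u [Xu [Olu _]]; apply: OlXU0.
- exact: SU.
Qed.

End LoricGraph.

Lemma graph_local_homeo L (R : lstructure L) (tau : set (set R)) n m (A : set R)
    (X : set ('I_n -> R)) (Y : set ('I_m -> R)) (f : ('I_n -> R) -> ('I_m -> R)) x :
  HGS R tau -> countable A ->
  definable_in A X -> definable_in A Y -> definable_in A (graph_on f X) ->
  dim_set X = dim_set Y -> dim_set (graph_on f X) = dim_set X ->
  (forall u, X u -> Y (f u)) -> (forall y, finite_set (fun u => X u /\ f u = y)) ->
  generic A (graph_on f X) (join x (f x)) ->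
  exists U0 V0,
    [/\ rel_open tau X U0, U0 x, rel_open tau Y V0, V0 (f x) & homeo_on tau f U0 V0].
Proof.
move=> [_ _ _ _ hgs5] cA Xdef Ydef Gdef dimXY dimGX fXY ffin Ggen.
have GXY : graph_on f X `<=` prodset X Y.
  by move=> _ [u [Xu ->]]; exists u, (f u); split=> //; apply: fXY.
have fib_dom u : finite_set [set y | graph_on f X (join u y)].
  by apply: sub_finite_set (finite_set1 (f u)) => y [u' [_ /join_inj [-> ->]]].
have fib_cod y : finite_set [set u | graph_on f X (join u y)].
  by apply: sub_finite_set (ffin y) => u [u' [Xu' /join_inj [-> ->]]].
have [U0 [V0 [U0open U0x V0open V0fx [g [ghomeo Gg]]]]] :=
  hgs5 n m A X Y _ x (f x) cA Xdef Ydef Gdef dimXY (esym (etrans dimGX dimXY))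
    GXY fib_dom fib_cod Ggen.
exists U0, V0; split=> //; apply: homeo_on_eq ghomeo => u U0u.
have : graph_on g U0 (join u (g u)) by exists u.
by rewrite -Gg => -[[u' [_ /join_inj [-> ->]]] _].
Qed.

Lemma generic_in_loric_part L (R : lstructure L) (tau : set (set R)) (d : R)
    (S : forall n : nat, set (set ('I_n -> R))) p (A : set R) (Z : set ('I_p -> R)) z :
  lore R tau S -> countable A -> definable_in A Z -> generic A Z z ->
  exists Z', [/\ rel_open tau Z Z', definable_in A Z', S p Z' & Z' z].
Proof.
move=> [_ _ _ _ lore4] cA Zdef [Zz zgen].
have [Z' [Z'open Z'def SZ' dim_lt]] := lore4 p A Z cA Zdef (ex_intro _ z Zz).
exists Z'; split=> //; apply: contrapT => Z'z.
have ZZ'def : definable_in A (Z `\` Z') by exact: (definableI d) (definableC d Z'def).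
have := le_lt_trans (dim_tuple_le_dim_set cA ZZ'def (conj Zz Z'z)) dim_lt.
by rewrite zgen ltxx.
Qed.

Lemma loric_homeo_empty L (R : lstructure L) (tau : set (set R))
    (S : forall n : nat, set (set ('I_n -> R))) n m
    (X : set ('I_n -> R)) (Y : set ('I_m -> R)) (f : ('I_n -> R) -> ('I_m -> R)) x :
  is_topology tau -> lore R tau S -> (R -> False) -> (forall u, X u -> Y (f u)) -> X x ->
  exists U V, nbhd_in tau X x U /\ nbhd_in tau Y (f x) V /\ loric_homeo tau S f U V.
Proof.
move=> [tauT _ _] [_ _ _ _ lore4] R0 fXY Xx.
have tuple_eq p (a b : 'I_p -> R) : a = b by apply: funext => i; case: (R0 (a i)).
have prod_openE p (W : set ('I_p -> R)) : prod_open tau W.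
  by move=> y Wy; exists (fun=> setT); split=> // z _; rewrite (tuple_eq _ z y).
have rel_open_refl p (Z : set ('I_p -> R)) : rel_open tau Z Z.
  by split=> //; exists setT; rewrite setTI.
have contE p q (g : ('I_p -> R) -> ('I_q -> R)) D : continuous_on tau g D.
  by move=> u _ W _ Wgu; exists setT; split=> // u' _ _; rewrite (tuple_eq _ (g u') (g u)).
have GT : graph_on f X = setT.
  by apply/seteqP; split=> // z _; exists x; split=> //; apply: tuple_eq.
have b0 : 'I_0 -> R by case=> ?; rewrite ltn0.
have Tdef : definable_in set0 (@setT ('I_(n + m) -> R)).
  exists (feq (tvar L 0) (tvar L 0)), 0, b0; split=> [[]//|].
  by apply/seteqP; split=> // z _ v _ _.
have [Z' [_ _ SZ' dim_lt]] := lore4 _ set0 setT (countable0 _) Tdef (ex_intro _ (join x (f x)) I).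
exists X, Y; split; [|split].
- by split=> //; exists X; split=> //; apply: rel_open_refl.
- by split=> //; exists Y; split=> //; apply: fXY.
split.
  split; [exact: fXY | exact: contE |].
  by exists (fun=> x); split=> [|u _|v _|]; [|apply: tuple_eq | apply: tuple_eq | apply: contE].
rewrite GT; case: (pselect (Z' (join x (f x)))) => [Z'x|nZ'x].
  rewrite (_ : setT = Z') //.
  by apply/seteqP; split=> // z _; rewrite (tuple_eq _ z (join x (f x))).
move: dim_lt; rewrite (_ : setT `\` Z' = setT) ?ltxx //.
by apply/seteqP; split=> // z _; split=> //; rewrite (tuple_eq _ z (join x (f x))).
Qed.

Theorem lemma2p16 (L : language) (R : lstructure L) (tau : set (set R))
    (S : forall n : nat, set (set ('I_n -> R))) (n m : nat) (A : set R)
    (X : set ('I_n -> R)) (Y : set ('I_m -> R))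
    (f : ('I_n -> R) -> ('I_m -> R)) (x : 'I_n -> R) :
  t_minimal R tau -> lore R tau S ->
  countable A -> definable_in A X -> definable_in A Y ->
  dim_set X = dim_set Y ->
  (forall u, X u -> Y (f u)) -> definable_in A (graph_on f X) ->
  (forall y, finite_set (fun u => X u /\ f u = y)) ->
  generic A X x ->
  exists U V, nbhd_in tau X x U /\ nbhd_in tau Y (f x) V /\ loric_homeo tau S f U V.
Proof.
move=> [hgs [phi [k [phi_open phi_basis]]] _] lor cA Xdef Ydef dimXY fXY Gdef ffin xgen.
have [[topo _] [[geo _] _] _ _ _] := hgs.
have [[d _]|R0] := pselect (exists r : R, True); last first.
  by apply: loric_homeo_empty topo lor _ fXY xgen.1 => r; apply: R0; exists r.
have exch : acl_exchange R by apply: geo.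
have [dimG Ggen] := generic_graph d exch cA Gdef xgen.
have [U0 [V0 [U0open U0x V0open _ fhomeo]]] :=
  graph_local_homeo hgs cA Xdef Ydef Gdef dimXY dimG fXY ffin Ggen.
have [Z' [Z'open Z'def SZ' Z'x]] := generic_in_loric_part d lor cA Gdef Ggen.
have [_ fcont _] := fhomeo.
have [U [Uopen Ux UU0 SU]] := loric_graph_nbhd d topo lor phi_open phi_basis
  U0open U0x fcont Z'open (definable_in_mono (@subsetT _ A) Z'def) SZ' Z'x.
have fUopen := rel_open_homeo_image topo fhomeo U0open.1 V0open Uopen UU0.
exists U, (f @` U); split; [|split].
- by split; [exact: Uopen.1 | exists U; split].
- by split; [exact: fUopen.1 | exists (f @` U); split=> //; exists x].
- by split=> //; exact: homeo_on_sub fhomeo UU0.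
Qed.
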